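(* The metric space $(\mathtt{CA},\delta)$ is not complete: there is a Cauchy sequence in $(\mathtt{CA},\delta)$ that does not converge to any element of $\mathtt{CA}$.
   Context: $\Sigma$ is a finite alphabet with $|\Sigma|\ge2$, $N(r)=[-r,r]$. A cellular automaton (CA) is a map $c:\Sigma^\mathbb{Z}\to\Sigma^\mathbb{Z}$ of the form $c(x)_i=F(x_{[i-r,i+r]})$ for a local function $F:\Sigma^{N(r)}\to\Sigma$. $\mathtt{CA}$ is the set of all CA. For $c,d\in\mathtt{CA}$ with common radius $r$, $D^c_d$ is the set of $w\in\Sigma^{N(r)}$ on which the local rules of $c$ and $d$ give different outputs, and $\delta(c,d)=|D^c_d|/|\Sigma|^{2r+1}$ (independent of $r$). *)

From HB Require Import structures.
From mathcomp Require Import all_boot all_order all_algebra.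
Set Implicit Arguments. Unset Strict Implicit. Unset Printing Implicit Defensive.
Import Order.TTheory GRing.Theory Num.Theory.

(* A window of radius r: a word indexed by 'I_(2r+1); index i stands for
   position i - r in N(r) = [-r, r]. *)
Definition window (S : finType) (r : nat) := {ffun 'I_(r.*2.+1) -> S}.

(* A cellular automaton, given by a radius r and a local function
   F : S^{N(r)} -> S; the global map is c(x)_i = F(x_[i-r,i+r]). *)
Record CA (S : finType) := mkCA {
  rad : nat;
  rule : {ffun window S rad -> S}
}.

(* Restriction of a radius-R window to its central radius-r subwindow
   (meaningful for r <= R). *)
Definition restr (S : finType) (r R : nat) (w : window S R) : window S r :=
  [ffun i : 'I_(r.*2.+1) => w (inord (i + (R - r)))].

Definition localAt (S : finType) (c : CA S) (R : nat) (w : window S R) : S :=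
  rule c (restr (rad c) w).

Definition Dset (S : finType) (c d : CA S) :
  {set window S (maxn (rad c) (rad d))} :=
  [set w | localAt c w != localAt d w].

Definition delta (S : finType) (c d : CA S) : rat :=
  ((#|Dset c d|)%:R / (#|S| ^ (maxn (rad c) (rad d)).*2.+1)%:R)%R.

(* Fix two distinct letters a, b and let q = |S|.  The "follower" automaton
   [follower a n] has radius n: it reads the n cells to the right of the
   centre, finds the first of them carrying a, and outputs the letter in the
   next cell (a if there is none in view).

   - Cauchy.  If a occurs among the cells 1 .. N, every follower of radius
     > N gives the same output.  So two followers of radius > N differ only
     on windows avoiding a on N fixed cells, a proportion ((q-1)/q)^N of all
     windows, and ((q-1)/q)^N <= (q-1)/N tends to 0.
   - No limit.  A CA c of radius r does not see cell r+2.  On the windows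
     reading b^r a a on cells 1 .. r+2 a follower of radius >= r+2 outputs a,
     and after exchanging a and b at cell r+2 it outputs b, while c gives the
     same output on both windows.  One window of each such pair lies in D, so
     delta(follower a n, c) >= 1 / (2 q^(r+2)) for all n >= r+2. *)

From mathcomp Require Import all_boot all_order all_algebra perm zify.
Import Order.TTheory GRing.Theory Num.Theory.
Set Implicit Arguments. Unset Strict Implicit.

Lemma card_family_prod (I T : finType) (F : I -> pred T) :
  #|[pred w : {ffun I -> T} | w \in family F]| = \prod_(i : I) #|F i|.
Proof.
by rewrite (@eq_card _ _ (family F)) // card_family foldrE big_map enumT.
Qed.

Lemma prod_block (N L k c q : nat) : L + k < N ->
  \prod_(i < N) (if L < i <= L + k then c else q) = c ^ k * q ^ (N - k).
Proof.
move=> hN; rewrite -(big_mkord xpredT (fun i => if L < i <= L + k then c else q)).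
rewrite (big_cat_nat (n := L.+1)) //=; last lia.
rewrite (big_cat_nat (m := L.+1) (n := (L + k).+1)) //=; try lia.
rewrite (@eq_big_nat _ _ _ 0 L.+1 _ (fun _ => q)); last first.
  by move=> i /andP[_ hi]; have -> : (L < i <= L + k) = false by lia.
rewrite (@eq_big_nat _ _ _ L.+1 (L + k).+1 _ (fun _ => c)); last first.
  by move=> i /andP[hi hi']; have -> : L < i <= L + k by lia.
rewrite (@eq_big_nat _ _ _ (L + k).+1 N _ (fun _ => q)); last first.
  by move=> i /andP[hi _]; have -> : (L < i <= L + k) = false by lia.
rewrite !prod_nat_const_nat.
have -> : N - k = (L.+1 - 0) + (N - (L + k).+1) by lia.
have -> : (L + k).+1 - L.+1 = k by lia.
by rewrite expnD mulnCA mulnA.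
Qed.

Definition block_family (T : finType) (N L k : nat) (P : 'I_N -> pred T) :
  pred {ffun 'I_N -> T} :=
  [pred w | w \in family (fun i : 'I_N => if L < i <= L + k then P i else predT)].

Lemma card_block_family (T : finType) (N L k p : nat) (P : 'I_N -> pred T) :
  L + k < N -> (forall i, #|P i| = p) ->
  #|block_family L k P| = p ^ k * #|T| ^ (N - k).
Proof.
move=> hN hP; rewrite card_family_prod -(prod_block _ _ hN).
by apply: eq_bigr => i _; case: ifP; rewrite ?hP // cardT -cardE.
Qed.

Lemma card_setU_preim (T : finType) (f : T -> T) (D : {set T}) :
  involutive f -> #|D :|: f @^-1: D| <= 2 * #|D|.
Proof.
move=> fK; rewrite cardsU card_preimset; last exact: can_inj fK.
by rewrite mul2n -addnn leq_subr.
Qed.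

(* The letter that follows the first occurrence of a in s (a itself when a
   does not occur in s, or occurs only as its last letter). *)
Definition first_succ (T : eqType) (a : T) (s : seq T) : T :=
  nth a s (index a s).+1.

Lemma first_succ_cat (T : eqType) (a : T) (s t : seq T) :
  (index a s).+1 < size s -> first_succ a (s ++ t) = first_succ a s.
Proof.
move=> h; rewrite /first_succ index_cat.
have -> : a \in s by rewrite -index_mem; lia.
by rewrite nth_cat h.
Qed.

Lemma first_succ_stable (T : eqType) (a : T) (x : nat -> T) (N m : nat) :
  N <= m -> (exists2 j, 1 <= j < N & x j = a) ->
  first_succ a (map x (iota 1 m)) = first_succ a (map x (iota 1 N)).
Proof.
move=> hNm [j /andP[j1 jN] xj].
rewrite -(subnKC hNm) iotaD map_cat first_succ_cat // size_map size_iota.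
have : index (nth a (map x (iota 1 N)) j.-1) (map x (iota 1 N)) <= j.-1.
  by apply: index_nth; rewrite size_map size_iota; lia.
rewrite (nth_map 0) ?size_iota; last lia.
rewrite nth_iota; last lia.
have -> : 1 + j.-1 = j by lia.
by rewrite xj; lia.
Qed.

Lemma first_succ_first (T : eqType) (a : T) (x : nat -> T) (r n : nat) :
  (forall j, 1 <= j <= r -> x j != a) -> x r.+1 = a -> r.+2 <= n ->
  first_succ a (map x (iota 1 n)) = x r.+2.
Proof.
move=> hne hr hn.
have -> : n = r + (n - r - 2).+2 by lia.
rewrite iotaD map_cat /= /first_succ index_cat.
have -> : (a \in [seq x i | i <- iota 1 r]) = false.
  apply/negP => /mapP [j]; rewrite mem_iota => hj hxj.
  have jr : 1 <= j <= r by lia.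
  by move: (hne j jr); rewrite hxj eqxx.
rewrite size_map size_iota.
have -> : 1 + r = r.+1 by lia.
rewrite hr /= eqxx addn0 nth_cat size_map size_iota.
have -> : (r.+1 < r) = false by lia.
by have -> : r.+1 - r = 1 by lia.
Qed.

Section Windows.
Variable S : finType.

Definition rpos (R k : nat) : 'I_(R.*2.+1) := inord (R + k).

Lemma rposE (R k : nat) : k <= R -> nat_of_ord (rpos R k) = R + k.
Proof. by move=> hk; rewrite inordK // -addnn; lia. Qed.

Definition cell (R : nat) (w : window S R) (k : nat) : S := w (rpos R k).

Lemma localAt_local (c : CA S) (R : nat) (w w' : window S R) : rad c <= R ->
  (forall i : 'I_(R.*2.+1), R - rad c <= i <= R + rad c -> w i = w' i) ->
  localAt c w = localAt c w'.
Proof.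
move=> hc hww'; rewrite /localAt; congr (rule c _); apply/ffunP => i.
have hi := ltn_ord i; rewrite !ffunE; apply: hww'.
by rewrite inordK; lia.
Qed.

Definition follower (a : S) (n : nat) : CA S :=
  @mkCA S n [ffun w : window S n => first_succ a (map (cell w) (iota 1 n))].

Lemma follower_localAt (a : S) (n R : nat) (w : window S R) : n <= R ->
  localAt (follower a n) w = first_succ a (map (cell w) (iota 1 n)).
Proof.
move=> hnR; rewrite /localAt ffunE; congr first_succ.
apply/eq_in_map => j; rewrite mem_iota => /andP[j1 jn].
rewrite /cell ffunE; congr (w _); apply: val_inj => /=.
rewrite rposE; last lia.
by rewrite rposE ?inordK -?addnn; lia.
Qed.

Lemma followers_agree (a : S) (N m n R : nat) (w : window S R) :
  N < m -> N < n -> m <= R -> n <= R ->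
  (exists2 j, 1 <= j <= N & cell w j = a) ->
  localAt (follower a m) w = localAt (follower a n) w.
Proof.
move=> hm hn hmR hnR [j hj wj]; rewrite !follower_localAt //.
by rewrite (first_succ_stable hm) ?(first_succ_stable hn) //; exists j => //; lia.
Qed.

Lemma card_Dset_followers (a : S) (N m n : nat) : N < m -> N < n ->
  #|Dset (follower a m) (follower a n)| <=
    #|S|.-1 ^ N * #|S| ^ ((maxn m n).*2.+1 - N).
Proof.
move=> hm hn; rewrite /Dset /=; set R := maxn m n.
rewrite -(@card_block_family _ _ R N _ (fun=> predC1 a)); last first.
- by move=> i; rewrite cardC1.
- by rewrite /R -addnn; lia.
apply/subset_leq_card/subsetP => w; rewrite !inE => hw.
apply/familyP => i; case: ifP => // /andP[iR iRN]; rewrite inE.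
apply: contra hw => /eqP wia; apply/eqP.
apply: (@followers_agree a N); rewrite /R; try lia.
have hi := ltn_ord i; exists (i - R); first lia.
by rewrite -wia /cell; congr (w _); apply: val_inj => /=; rewrite rposE; lia.
Qed.

Definition swap_cell (a b : S) (R k : nat) (w : window S R) : window S R :=
  [ffun i => if i == rpos R k then tperm a b (w i) else w i].

Lemma swap_cellK (a b : S) (R k : nat) : involutive (@swap_cell a b R k).
Proof.
by move=> w; apply/ffunP => i; rewrite !ffunE; case: eqP => //; rewrite tpermK.
Qed.

Lemma cell_swap_cell (a b : S) (R k j : nat) (w : window S R) :
  j <= R -> k <= R ->
  cell (swap_cell a b k w) j = if j == k then tperm a b (cell w j) else cell w j.
Proof.
move=> hj hk; rewrite /cell ffunE.
have -> : (rpos R j == rpos R k) = (j == k).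
  by apply/eqP/eqP => [/(congr1 val) /=|->//]; rewrite !rposE //; lia.
by case: eqP => // ->.
Qed.

Lemma localAt_swap_cell (c : CA S) (a b : S) (R k : nat) (w : window S R) :
  rad c < k <= R -> localAt c (swap_cell a b k w) = localAt c w.
Proof.
move=> hk; apply: localAt_local => [|i hi]; first lia.
rewrite ffunE; case: eqP => // hik; move: hi; rewrite hik rposE; lia.
Qed.

(* Windows reading b^r a a on the cells 1 .. r+2 right of the centre. *)
Definition pattern_windows (a b : S) {R : nat} (r : nat) :
    pred {ffun 'I_(R.*2.+1) -> S} :=
  block_family R r.+2 (fun i : 'I_(R.*2.+1) => pred1 (if i <= R + r then b else a)).

Lemma follower_on_pattern (a b : S) (r n R : nat) (w : window S R) :
  a != b -> r.+2 <= n <= R -> w \in pattern_windows a b r ->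
  localAt (follower a n) w = a /\
  localAt (follower a n) (swap_cell a b r.+2 w) = b.
Proof.
move=> hab /andP[hn hnR] /familyP hw.
have cellE j : 1 <= j <= r.+2 -> cell w j = if j <= r then b else a.
  move=> hj; move: (hw (rpos R j)); rewrite rposE; last lia.
  have inblock : R < R + j <= R + r.+2 by lia.
  by rewrite inblock leq_add2l inE => /eqP.
have notA j : 1 <= j <= r -> cell w j != a.
  move=> hj; rewrite cellE; last lia.
  have -> : j <= r by lia.
  by rewrite eq_sym hab.
have wa : cell w r.+1 = a by rewrite cellE ?ltnn //; lia.
have wa2 : cell w r.+2 = a.
  rewrite cellE; last lia.
  by have -> : (r.+2 <= r) = false by lia.
have swapE j : 1 <= j <= r.+1 -> cell (swap_cell a b r.+2 w) j = cell w j.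
  move=> hj; rewrite cell_swap_cell; [|lia|lia].
  by have -> : (j == r.+2) = false by lia.
have swap2 : cell (swap_cell a b r.+2 w) r.+2 = b.
  by rewrite cell_swap_cell ?eqxx ?wa2 ?tpermL //; lia.
rewrite !follower_localAt //; split.
  by rewrite (first_succ_first notA wa hn).
rewrite (@first_succ_first _ a _ r) //.
- by move=> j hj; rewrite swapE ?notA //; lia.
- by rewrite swapE //; lia.
Qed.

Lemma card_Dset_follower_lower (a b : S) (c : CA S) (n : nat) :
  a != b -> (rad c).+2 <= n ->
  #|S| ^ ((maxn n (rad c)).*2.+1 - (rad c).+2) <= 2 * #|Dset (follower a n) c|.
Proof.
move=> hab hn; rewrite /Dset /=; set r := rad c; set R := maxn n r.
set D := [set w | _]; pose sw := @swap_cell a b R r.+2.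
have cover : pattern_windows a b r \subset D :|: sw @^-1: D.
  apply/subsetP => w /(@follower_on_pattern a b r n R w hab) [].
    by rewrite /R; lia.
  move=> outw outsw; rewrite !inE outw outsw localAt_swap_cell; last by rewrite /R; lia.
  by case: eqP => //= <-; rewrite eq_sym.
have card_pattern : #|@pattern_windows a b R r| = #|S| ^ (R.*2.+1 - r.+2).
  rewrite /pattern_windows (@card_block_family _ _ R r.+2 1) ?exp1n ?mul1n //.
  - by rewrite /R -addnn; lia.
  - by move=> i; rewrite card1.
rewrite -card_pattern.
exact: leq_trans (subset_leq_card cover) (card_setU_preim _ (@swap_cellK a b R r.+2)).
Qed.

End Windows.

(* The elementary inequality k t^k <= t (t+1)^k, behind (t/(t+1))^k <= t/k. *)
Lemma mul_expn_le (t k : nat) : k * t ^ k <= t * t.+1 ^ k.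
Proof.
elim: k => [|k IH]; first by rewrite mul0n.
have le_exp : t ^ k <= t.+1 ^ k by case: k {IH} => // k; rewrite leq_exp2r.
rewrite !expnS; nia.
Qed.

Lemma ratio_expn_le (F : numFieldType) (q k : nat) : 0 < q -> 0 < k ->
  ((q.-1 ^ k)%:R / (q ^ k)%:R <= q.-1%:R / k%:R :> F)%R.
Proof.
case: q => // t _ k_gt0 /=.
rewrite ler_pdivrMr ?ltr0n ?expn_gt0 // mulrAC ler_pdivlMr ?ltr0n //.
by rewrite -!natrM ler_nat mulnC mul_expn_le.
Qed.

Lemma ratio_le_of_count (F : numFieldType) (d p q k M : nat) :
  0 < q -> k <= M -> d <= p * q ^ (M - k) ->
  (d%:R / (q ^ M)%:R <= p%:R / (q ^ k)%:R :> F)%R.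
Proof.
move=> q_gt0 kM hd.
rewrite ler_pdivrMr ?ltr0n ?expn_gt0 ?q_gt0 // -(subnKC kM) expnD natrM mulrA.
by rewrite divfK ?pnatr_eq0 -?lt0n ?expn_gt0 ?q_gt0 // -natrM ler_nat.
Qed.

Lemma ratio_ge_of_count (F : numFieldType) (d q k M : nat) :
  0 < q -> k <= M -> q ^ (M - k) <= 2 * d ->
  (1 / (2 * q ^ k)%:R <= d%:R / (q ^ M)%:R :> F)%R.
Proof.
move=> q_gt0 kM hd.
rewrite ler_pdivrMr ?ltr0n ?muln_gt0 ?expn_gt0 ?q_gt0 // mulrAC.
rewrite ler_pdivlMr ?ltr0n ?expn_gt0 ?q_gt0 // mul1r -natrM ler_nat.
by rewrite -(subnKC kM) expnD mulnC mulnA leq_pmul2r ?expn_gt0 ?q_gt0 // mulnC.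
Qed.

Lemma delta_followers_le (S : finType) (a : S) (N m n : nat) : N < m -> N < n ->
  (delta (follower a m) (follower a n) <= (#|S|.-1 ^ N)%:R / (#|S| ^ N)%:R)%R.
Proof.
move=> hm hn; apply: ratio_le_of_count; last exact: card_Dset_followers.
- by apply/card_gt0P; exists a.
- by rewrite /=; lia.
Qed.

Lemma delta_follower_ge (S : finType) (a b : S) (c : CA S) (n : nat) :
  a != b -> (rad c).+2 <= n ->
  (1 / (2 * #|S| ^ (rad c).+2)%:R <= delta (follower a n) c)%R.
Proof.
move=> hab hn; apply: ratio_ge_of_count; last exact: card_Dset_follower_lower hab hn.
- by apply/card_gt0P; exists a.
- by rewrite /=; lia.
Qed.

Lemma followers_cauchy (S : finType) (a : S) (eps : rat) : (0 < eps)%R ->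
  exists N : nat, forall m n : nat, N <= m -> N <= n ->
    (delta (follower a m) (follower a n) < eps)%R.
Proof.
move=> eps_gt0; have q_gt0 : 0 < #|S| by apply/card_gt0P; exists a.
set K := Num.bound (#|S|.-1%:R / eps).
exists K.+2 => m n hm hn.
have [hKm hKn] : K.+1 < m /\ K.+1 < n by lia.
apply: le_lt_trans (delta_followers_le a hKm hKn) _.
apply: le_lt_trans (ratio_expn_le _ q_gt0 (ltn0Sn K)) _.
rewrite ltr_pdivrMr ?ltr0n // mulrC -ltr_pdivrMr //.
apply: lt_le_trans (archi_boundP _) _; first by rewrite divr_ge0 // ltW.
by rewrite ler_nat.
Qed.

Lemma followers_no_limit (S : finType) (a b : S) (c : CA S) : a != b ->
  ~ (forall eps : rat, (0 < eps)%R ->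
       exists N : nat, forall n : nat, N <= n -> (delta (follower a n) c < eps)%R).
Proof.
move=> hab hc; have q_gt0 : 0 < #|S| by apply/card_gt0P; exists a.
have eps_gt0 : (0 < 1 / (2 * #|S| ^ (rad c).+2)%:R :> rat)%R.
  by rewrite divr_gt0 // ltr0n muln_gt0 expn_gt0 q_gt0.
have [N hN] := hc _ eps_gt0.
have := hN (maxn N (rad c).+2) (leq_maxl _ _).
by rewrite ltNge (delta_follower_ge hab) ?leq_maxr.
Qed.

Theorem mainTheorem10 (S : finType) (hS : 1 < #|S|) :
  exists u : nat -> CA S,
    (forall eps : rat, (0 < eps)%R ->
       exists N : nat, forall m n : nat, N <= m -> N <= n ->
         (delta (u m) (u n) < eps)%R) /\
    ~ (exists c : CA S, forall eps : rat, (0 < eps)%R ->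
         exists N : nat, forall n : nat, N <= n -> (delta (u n) c < eps)%R).
Proof.
have [a [b [_ _ hab]]] := card_gt1P hS.
exists (follower a); split; first exact: followers_cauchy.
by case=> c; apply: followers_no_limit hab.
Qed.
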